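(* If $G$ and $H$ are graphs on the same vertex set $V$, and $G\cup H$ denotes the graph on $V$ with edge set $E(G)\cup E(H)$, then \[\bar{\vartheta}(G\cup H)\le\bar{\vartheta}(G)\,\bar{\vartheta}(H).\]
   Context: Graphs are finite, simple and undirected. For a real $k>1$, a strict vector $k$-coloring of $G$ is a map $\varphi$ from $V(G)$ to the unit sphere of some $\mathbb{R}^d$ with $\varphi(u)^T\varphi(v)=-\frac1{k-1}$ whenever $u\sim v$; $\bar{\vartheta}(G)$ is the infimum of such $k$, and equals $\vartheta(\overline{G})$, the Lovász theta function of the complement of $G$. *)

From HB Require Import structures.
From mathcomp Require Import all_boot all_order all_algebra.
From mathcomp Require Import boolp classical_sets reals.
Set Implicit Arguments. Unset Strict Implicit. Unset Printing Implicit Defensive.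
Import Order.TTheory GRing.Theory Num.Theory.
Local Open Scope ring_scope.
Local Open Scope classical_set_scope.

Definition simple_graph (V : finType) (e : rel V) : Prop :=
  symmetric e /\ irreflexive e.

Definition graph_union (V : finType) (G H : rel V) : rel V :=
  fun u v => G u v || H u v.

Definition dotv (R : realType) (d : nat) (x y : 'rV[R]_d) : R :=
  \sum_(i < d) x 0 i * y 0 i.

Definition strict_vector_coloring (R : realType) (V : finType) (G : rel V)
    (k : R) (d : nat) (phi : V -> 'rV[R]_d) : Prop :=
  (forall v, dotv (phi v) (phi v) = 1) /\
  (forall u v, G u v -> dotv (phi u) (phi v) = - (k - 1)^-1).

Definition theta_bar (R : realType) (V : finType) (G : rel V) : R :=
  inf [set k : R | 1 < k /\
        exists (d : nat) (phi : V -> 'rV[R]_d), strict_vector_coloring G k phi].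

(* If phi is a strict vector k-colouring of G and psi a strict vector
   l-colouring of H, then 1 + (k-1)<phi u, phi v> is 0 on edges of G and k on
   the diagonal, and likewise for psi.  Gluing psi, phi and phi (x) psi with the
   weights sqrt(l-1), sqrt(k-1), sqrt((k-1)(l-1)) yields vectors whose Gram
   matrix is (1 + (k-1)<phi>)(1 + (l-1)<psi>) - 1; after scaling by
   1/sqrt(kl-1) this is a strict vector kl-colouring of G u H. *)

From mathcomp Require Import all_boot all_order all_algebra.
From mathcomp Require Import boolp classical_sets reals.
From mathcomp Require Import ring lra.
Set Implicit Arguments. Unset Strict Implicit. Unset Printing Implicit Defensive.
Import Order.TTheory GRing.Theory Num.Theory.
Local Open Scope ring_scope.
Local Open Scope classical_set_scope.

Section InnerProduct.
Variable R : realType.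

Lemma dotvC d (x y : 'rV[R]_d) : dotv x y = dotv y x.
Proof. by apply: eq_bigr => i _; rewrite mulrC. Qed.

Lemma dotvDl d (x y z : 'rV[R]_d) : dotv (x + y) z = dotv x z + dotv y z.
Proof. by rewrite /dotv -big_split; apply: eq_bigr => i _; rewrite mxE mulrDl. Qed.

Lemma dotvZl d a (x z : 'rV[R]_d) : dotv (a *: x) z = a * dotv x z.
Proof. by rewrite /dotv big_distrr; apply: eq_bigr => i _; rewrite !mxE -mulrA. Qed.

Lemma dotvNl d (x z : 'rV[R]_d) : dotv (- x) z = - dotv x z.
Proof. by rewrite -scaleN1r dotvZl mulN1r. Qed.

Lemma dotvDr d (x y z : 'rV[R]_d) : dotv z (x + y) = dotv z x + dotv z y.
Proof. by rewrite dotvC dotvDl !(dotvC z). Qed.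

Lemma dotvZr d a (x z : 'rV[R]_d) : dotv x (a *: z) = a * dotv x z.
Proof. by rewrite dotvC dotvZl dotvC. Qed.

Lemma dotvNr d (x z : 'rV[R]_d) : dotv z (- x) = - dotv z x.
Proof. by rewrite dotvC dotvNl dotvC. Qed.

Definition dotvE := (dotvDl, dotvDr, dotvZl, dotvZr, dotvNl, dotvNr).

Lemma dotv_row_mx m n (x x' : 'rV[R]_m) (y y' : 'rV[R]_n) :
  dotv (row_mx x y) (row_mx x' y') = dotv x x' + dotv y y'.
Proof.
rewrite /dotv big_split_ord /=.
by congr (_ + _); apply: eq_bigr => i _; rewrite ?row_mxEl ?row_mxEr.
Qed.

Lemma dotv_mxvec_tensor m n (x x' : 'rV[R]_m) (y y' : 'rV[R]_n) :
  dotv (mxvec (x^T *m y)) (mxvec (x'^T *m y')) = dotv x x' * dotv y y'.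
Proof.
rewrite /dotv (reindex _ (curry_mxvec_bij _ _)) /= big_distrl /=.
under [RHS]eq_bigr do rewrite big_distrr.
rewrite pair_bigA; apply: eq_bigr => [[i j]] _ /=.
by rewrite !mxvecE !mxE !big_ord1 !mxE; ring.
Qed.

Lemma dotv_delta_mx d (i j : 'I_d) :
  dotv (delta_mx 0 i) (delta_mx 0 j) = (i == j)%:R :> R.
Proof.
rewrite /dotv (bigD1 i) //= big1 => [|k /negbTE ki]; last by rewrite !mxE ki mul0r.
by rewrite !mxE !eqxx mul1r addr0.
Qed.

Lemma dotv_delta_const_mx d (i : 'I_d) : dotv (delta_mx 0 i) (const_mx 1) = 1 :> R.
Proof.
rewrite /dotv (bigD1 i) //= big1 => [|k /negbTE ki]; last by rewrite !mxE ki mul0r.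
by rewrite !mxE !eqxx mul1r addr0.
Qed.

Lemma dotv_const_mx d : dotv (const_mx 1 : 'rV[R]_d) (const_mx 1) = d%:R.
Proof.
rewrite /dotv (eq_bigr (fun _ => 1)) => [|i _]; last by rewrite !mxE mulr1.
by rewrite sumr_const card_ord.
Qed.

End InnerProduct.

Section VectorColorings.
Variable R : realType.

Definition strict_vector_colorable (V : finType) (G : rel V) (k : R) : Prop :=
  1 < k /\ exists (d : nat) (phi : V -> 'rV[R]_d), strict_vector_coloring G k phi.

Lemma theta_barE (V : finType) (G : rel V) :
  theta_bar R G = inf (strict_vector_colorable G).
Proof. by []. Qed.

Lemma strict_vector_colorable_gt1 (V : finType) (G : rel V) :
  lbound (strict_vector_colorable G) 1.
Proof. by move=> k [/ltW]. Qed.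

(* The vertices of a regular simplex centred at the origin. *)
Definition simplex_vertex d (i : 'I_d) : 'rV[R]_d :=
  Num.sqrt (d%:R / (d%:R - 1)) *: (delta_mx 0 i - d%:R^-1 *: const_mx 1).

Lemma dotv_simplex_vertex d (i j : 'I_d) : (1 < d)%N ->
  dotv (simplex_vertex i) (simplex_vertex j) =
  if i == j then 1 else - (d%:R - 1)^-1.
Proof.
move=> d_gt1; have d2 : 2 <= d%:R :> R by rewrite (ler_nat R 2 d).
have s2 : Num.sqrt (d%:R / (d%:R - 1)) ^+ 2 = d%:R / (d%:R - 1) :> R.
  by rewrite sqr_sqrtr // divr_ge0 //; lra.
rewrite /simplex_vertex dotvZl dotvZr mulrA -expr2 s2 !dotvE.
rewrite dotv_delta_mx (dotvC (const_mx 1)) !dotv_delta_const_mx dotv_const_mx.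
by case: eqP => _ /=; field; apply/andP; split; apply/eqP; lra.
Qed.

Lemma irreflexive_strict_vector_colorable (V : finType) (G : rel V) :
  irreflexive G -> strict_vector_colorable G #|V|.+2%:R.
Proof.
move=> irrG; have leVN : (#|V| <= #|V|.+2)%N by rewrite leqW.
split; first by rewrite ltr1n.
exists #|V|.+2, (fun v => simplex_vertex (widen_ord leVN (enum_rank v))).
split=> [v | u v uv]; rewrite dotv_simplex_vertex //.
all: rewrite -(inj_eq val_inj) /= (inj_eq val_inj) (inj_eq enum_rank_inj).
  by rewrite eqxx.
by case: eqP uv => [-> | _]; rewrite ?irrG.
Qed.

Definition tensor_join m n (p q : R) (x : 'rV[R]_m) (y : 'rV[R]_n) :
    'rV[R]_(n + (m + m * n)) :=
  row_mx (p *: y) (row_mx (q *: x) ((p * q) *: mxvec (x^T *m y))).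

Lemma dotv_tensor_join m n (p q : R) (x x' : 'rV[R]_m) (y y' : 'rV[R]_n) :
  dotv (tensor_join p q x y) (tensor_join p q x' y') =
  (1 + q ^+ 2 * dotv x x') * (1 + p ^+ 2 * dotv y y') - 1.
Proof. by rewrite !dotv_row_mx !dotvE dotv_mxvec_tensor; ring. Qed.

Lemma strict_vector_colorable_union (V : finType) (G H : rel V) (k l : R) :
  strict_vector_colorable G k -> strict_vector_colorable H l ->
  strict_vector_colorable (graph_union G H) (k * l).
Proof.
move=> [k_gt1 [d1 [phi [phi_unit phi_edge]]]] [l_gt1 [d2 [psi [psi_unit psi_edge]]]].
have kl_gt1 : 1 < k * l by rewrite -[1]mulr1 ltr_pM //; lra.
split=> //.
have sqr_sqrt (a : R) : 0 <= a -> Num.sqrt a ^+ 2 = a by move=> a_ge0; rewrite sqr_sqrtr.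
pose s := Num.sqrt (k * l - 1)^-1.
pose xi v := s *: tensor_join (Num.sqrt (l - 1)) (Num.sqrt (k - 1)) (phi v) (psi v).
have dot_xi u v : dotv (xi u) (xi v) =
    ((1 + (k - 1) * dotv (phi u) (phi v)) * (1 + (l - 1) * dotv (psi u) (psi v)) - 1)
    / (k * l - 1).
  by rewrite /xi dotvZl dotvZr dotv_tensor_join mulrA -expr2 !sqr_sqrt ?invr_ge0; lra.
exists (d2 + (d1 + d1 * d2))%N, xi; split=> [v | u v /orP[uv | uv]];
  rewrite dot_xi ?phi_unit ?psi_unit ?(phi_edge _ _ uv) ?(psi_edge _ _ uv);
  by field; do ?[apply/andP; split]; apply/eqP; lra.
Qed.

End VectorColorings.

Lemma inf_mul_le (R : realType) (A B C : set R) (m : R) :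
  0 < m -> lbound A m -> lbound B m -> has_lbound C ->
  A !=set0 -> B !=set0 ->
  (forall a b, A a -> B b -> C (a * b)) ->
  inf C <= inf A * inf B.
Proof.
move=> m_gt0 lbA lbB lbC A0 B0 mulAB.
have A_gt0 a : A a -> 0 < a by move=> Aa; apply: lt_le_trans m_gt0 (lbA _ Aa).
have infB_gt0 : 0 < inf B by apply: lt_le_trans m_gt0 (lb_le_inf B0 lbB).
have div_le_infB a : A a -> inf C / a <= inf B.
  move=> Aa; apply: lb_le_inf B0 _ => b Bb.
  by rewrite ler_pdivrMr ?(A_gt0 _ Aa) // mulrC; exact: (ge_inf lbC (mulAB _ _ Aa Bb)).
have : inf C / inf B <= inf A.
  apply: lb_le_inf A0 _ => a Aa; have a_gt0 := A_gt0 a Aa.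
  by rewrite ler_pdivrMr // mulrC -ler_pdivrMr //; apply: div_le_infB.
by rewrite ler_pdivrMr.
Qed.

Theorem corollary4p5 (R : realType) (V : finType) (G H : rel V) :
  simple_graph G -> simple_graph H ->
  theta_bar R (graph_union G H) <= theta_bar R G * theta_bar R H.
Proof.
move=> [_ irrG] [_ irrH]; rewrite !theta_barE.
apply: (inf_mul_le ltr01); do ?exact: strict_vector_colorable_gt1.
- by exists 1; apply: strict_vector_colorable_gt1.
- by eexists; apply: irreflexive_strict_vector_colorable.
- by eexists; apply: irreflexive_strict_vector_colorable.
- by move=> k l; apply: strict_vector_colorable_union.
Qed.
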